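(* Let $M$, $(p_j)_{j\in M}$, $m$ and $LP$ be as follows: $M$ is a finite set of item types, $(p_j)$ is a probability distribution on $M$, $m\ge 1$, and $$LP=\max \sum_{i,S}x_{i,S}w_i(S)\quad\text{s.t.}\quad \sum_{i,S}x_{i,S}c_j(S)\le p_j m\ \ \forall j;\qquad \sum_S x_{i,S}=1\ \ \forall i;\qquad x_{i,S}\ge 0,$$ with $S$ ranging over multisets of at most $m$ items and $c_j(S)$ the multiplicity of $j$ in $S$. Assume the valuations $w_1,\dots,w_n:\mathbb{Z}_+^M\to\mathbb{R}$ are monotone and have the property of diminishing returns. Fix any partial allocation $(T_1,\dots,T_n)$ of multisets. Let the next item $j$ be drawn from $(p_j)$ and allocated greedily, i.e., to an agent maximizing $w_i(T_i+j)-w_i(T_i)$. Then the expected increase in welfare is at least $\frac1m\big(LP-\sum_i w_i(T_i)\big)$.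
   Context: Multisets over $M$ are identified with vectors in $\mathbb{Z}_+^M$. $T+j$ adds one copy of $j$ to $T$. A function $f:\mathbb{Z}_+^M\to\mathbb{R}$ has the property of diminishing returns if for all $x\le y$ (coordinatewise) and every unit vector $e_j$, $f(x+e_j)-f(x)\ge f(y+e_j)-f(y)$. It is monotone if $f(x)\le f(y)$ whenever $x\le y$. *)

From HB Require Import structures.
From mathcomp Require Import all_boot all_order all_algebra.
Set Implicit Arguments. Unset Strict Implicit. Unset Printing Implicit Defensive.
Import Order.TTheory GRing.Theory Num.Theory.
Local Open Scope ring_scope.

Definition mset (M : finType) := M -> nat.

Definition add1 (M : finType) (T : mset M) (j : M) : mset M :=
  fun k => (T k + (k == j))%N.

Definition mle (M : finType) (x y : mset M) : Prop := forall k, (x k <= y k)%N.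

Definition monotone_val (M : finType) (R : numDomainType) (f : mset M -> R) : Prop :=
  forall x y, mle x y -> f x <= f y.

Definition dim_returns (M : finType) (R : numDomainType) (f : mset M -> R) : Prop :=
  forall x y j, mle x y -> f (add1 y j) - f y <= f (add1 x j) - f x.

(* Multisets of at most m items: encoded by multiplicity functions bounded by m
   (with total size at most m); msS converts to a multiset vector. *)
Definition bset (M : finType) (m : nat) := {ffun M -> 'I_m.+1}.
Definition msS (M : finType) (m : nat) (S : bset M m) : mset M := fun j => nat_of_ord (S j).
Definition small (M : finType) (m : nat) (S : bset M m) : bool :=
  (\sum_(j : M) nat_of_ord (S j) <= m)%N.

Definition lp_feasible (M : finType) (R : numDomainType) (n m : nat) (p : M -> R)
  (x : 'I_n -> bset M m -> R) : Prop :=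
  [/\ forall j : M,
        \sum_(i < n) \sum_(S : bset M m | small S) x i S * (nat_of_ord (S j))%:R
          <= p j * m%:R,
      forall i : 'I_n, \sum_(S : bset M m | small S) x i S = 1
    & forall i S, small S -> 0 <= x i S].

Definition lp_value (M : finType) (R : numDomainType) (n m : nat)
  (w : 'I_n -> mset M -> R) (x : 'I_n -> bset M m -> R) : R :=
  \sum_(i < n) \sum_(S : bset M m | small S) x i S * w i (msS S).

Definition is_LP (M : finType) (R : numDomainType) (n : nat) (m : nat) (p : M -> R)
  (w : 'I_n -> mset M -> R) (LP : R) : Prop :=
  (exists2 x : 'I_n -> bset M m -> R, lp_feasible p x & lp_value w x = LP) /\
  (forall x : 'I_n -> bset M m -> R, lp_feasible p x -> lp_value w x <= LP).

Definition gain (M : finType) (R : numDomainType) (n : nat)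
  (w : 'I_n -> mset M -> R) (T : 'I_n -> mset M) (i : 'I_n) (j : M) : R :=
  w i (add1 (T i) j) - w i (T i).

From HB Require Import structures.
From mathcomp Require Import all_boot all_order all_algebra.
Import Order.TTheory GRing.Theory Num.Theory.
Set Implicit Arguments. Unset Strict Implicit. Unset Printing Implicit Defensive.
Local Open Scope ring_scope.

(* Let G j be the greedy gain of item j, i.e. the largest
   marginal value max_i (w_i(T_i + j) - w_i(T_i)).
   1. For a monotone valuation with diminishing returns, adding a whole
      multiset U to T gains at most the sum of the single-item marginals at T:
      f(T + U) - f(T) <= sum_k U_k (f(T + k) - f(T))   (marginals_bound).
   2. Hence, by monotonicity, any bundle S is worth to agent i at most
      w_i(T_i) + sum_j S_j G j                       (bundle_surplus_bound).
   3. Averaging this bound over an optimal LP solution x, and using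
      sum_S x_{i,S} = 1 together with the capacity constraints
      sum_{i,S} x_{i,S} S_j <= p_j m and G >= 0, gives
      LP - sum_i w_i(T_i) <= m * sum_j p_j G j          (lp_surplus_bound).
   Dividing by m yields the theorem, since sum_j p_j G j is exactly the
   expected welfare increase of the greedy step. *)

Definition addv {M : finType} (T U : mset M) : mset M := fun k => (T k + U k)%N.

Section Valuations.
Variables (R : realFieldType) (M : finType) (f : mset M -> R).
Hypothesis f_mono : monotone_val f.

Lemma monotone_val_ext (x y : mset M) : (forall k, x k = y k) -> f x = f y.
Proof. by move=> exy; apply/le_anti/andP; split; apply: f_mono => k; rewrite exy. Qed.

Lemma marginal_ge0 (T : mset M) (j : M) : 0 <= f (add1 T j) - f T.
Proof. by rewrite subr_ge0; apply: f_mono => k; rewrite /add1 leq_addr. Qed.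

End Valuations.

Lemma mset_remove_item (M : finType) (U : mset M) (N : nat) :
  (\sum_k U k = N.+1)%N ->
  exists j U', (forall k, U k = add1 U' j k) /\ (\sum_k U' k = N)%N.
Proof.
move=> sizeU.
have [j Uj_gt0] : exists j, (0 < U j)%N.
  case: (pickP (fun k => 0 < U k)%N) => [j Uj|noPos]; first by exists j.
  by move: sizeU; rewrite big1 // => k _; apply/eqP; rewrite -leqn0 leqNgt noPos.
pose U' k := (U k - (k == j))%N.
have eqU k : U k = add1 U' j k.
  rewrite /add1 /U'; case: eqP => [->|_]; first by rewrite subnK.
  by rewrite subn0 addn0.
exists j, U'; split => //.
have indicator_sum : (\sum_(k : M) ((k == j) : nat) = 1)%N.
  by rewrite (bigD1 j) //= eqxx big1 ?addn0 // => k /negbTE ->.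
move: sizeU; rewrite (eq_bigr _ (fun k _ => eqU k)) big_split /=.
by rewrite indicator_sum addn1 => -[].
Qed.

Lemma weighted_add1 (R : realFieldType) (M : finType) (U : mset M) (j : M)
    (a : M -> R) :
  \sum_k (add1 U j k)%:R * a k = \sum_k (U k)%:R * a k + a j.
Proof.
under eq_bigr => k _ do rewrite /add1 natrD mulrDl.
rewrite big_split /=; congr (_ + _).
by rewrite (bigD1 j) //= eqxx mul1r big1 ?addr0 // => k /negbTE ->; rewrite mul0r.
Qed.

Lemma marginals_bound (R : realFieldType) (M : finType) (f : mset M -> R)
    (T U : mset M) :
  monotone_val f -> dim_returns f ->
  f (addv T U) - f T <= \sum_k (U k)%:R * (f (add1 T k) - f T).
Proof.
move=> f_mono f_dr; move: {2}(\sum_k U k)%N (erefl (\sum_k U k)%N) => N.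
elim: N U => [|N IH] U sizeU.
  have U0 k : U k = 0%N.
    by apply/eqP; rewrite -leqn0 -sizeU (bigD1 k) //= leq_addr.
  rewrite (@monotone_val_ext _ _ _ f_mono (addv T U) T); last first.
    by move=> k; rewrite /addv U0 addn0.
  by rewrite subrr big1 // => k _; rewrite U0 mul0r.
have [j [U' [eqU sizeU']]] := mset_remove_item sizeU.
have -> : f (addv T U) = f (add1 (addv T U') j).
  by apply: monotone_val_ext => // k; rewrite /add1 /addv eqU /add1 addnA.
rewrite (eq_bigr _ (fun k _ => congr1 (fun n => n%:R * _) (eqU k))).
have -> : f (add1 (addv T U') j) - f T =
    (f (add1 (addv T U') j) - f (addv T U')) + (f (addv T U') - f T).
  by rewrite addrA subrK.
rewrite weighted_add1 [X in _ <= X]addrC; apply: lerD; last exact: IH.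
by apply: f_dr => k; rewrite /addv leq_addr.
Qed.

Lemma bundle_surplus_bound (R : realFieldType) (M : finType) (n : nat)
    (w : 'I_n -> mset M -> R) (T : 'I_n -> mset M) (G : M -> R)
    (i : 'I_n) (S : mset M) :
  monotone_val (w i) -> dim_returns (w i) ->
  (forall j, gain w T i j <= G j) ->
  w i S - w i (T i) <= \sum_j (S j)%:R * G j.
Proof.
move=> mono dr dominated.
apply: le_trans (_ : _ <= w i (addv (T i) S) - w i (T i)) _.
  by rewrite lerD2r; apply: mono => k; rewrite /addv leq_addl.
apply: le_trans (marginals_bound _ _ mono dr) _.
by apply: ler_sum => j _; apply: ler_wpM2l; [exact: ler0n | exact: dominated].
Qed.

Lemma lp_surplus_bound (R : realFieldType) (M : finType) (n m : nat)
    (p : M -> R) (w : 'I_n -> mset M -> R) (T : 'I_n -> mset M) (G : M -> R)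
    (x : 'I_n -> bset M m -> R) :
  lp_feasible p x -> (forall j, 0 <= G j) ->
  (forall i (S : bset M m), small S ->
     w i (msS S) - w i (T i) <= \sum_j (S j)%:R * G j) ->
  lp_value w x - \sum_(i < n) w i (T i) <= m%:R * \sum_j p j * G j.
Proof.
move=> [capacity unit_mass x_ge0] G_ge0 bundle_bound.
have -> : \sum_(i < n) w i (T i) =
    \sum_(i < n) \sum_(S : bset M m | small S) x i S * w i (T i).
  by apply: eq_bigr => i _; rewrite -big_distrl /= unit_mass mul1r.
rewrite /lp_value -sumrB.
apply: le_trans (_ : _ <= \sum_(i < n) \sum_(S : bset M m | small S)
      \sum_j x i S * ((S j)%:R * G j)) _.
  apply: ler_sum => i _; rewrite -sumrB; apply: ler_sum => S smallS.
  rewrite -mulrBr -mulr_sumr; apply: ler_wpM2l; first exact: x_ge0.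
  exact: bundle_bound.
rewrite (eq_bigr (fun i => \sum_j \sum_(S : bset M m | small S)
      x i S * ((S j)%:R * G j))); last by move=> i _; rewrite exchange_big.
rewrite exchange_big /= mulr_sumr; apply: ler_sum => j _.
have -> : \sum_(i < n) \sum_(S : bset M m | small S) x i S * ((S j)%:R * G j) =
    (\sum_(i < n) \sum_(S : bset M m | small S) x i S * (S j)%:R) * G j.
  rewrite big_distrl; apply: eq_bigr => i _; rewrite big_distrl.
  by apply: eq_bigr => S _; rewrite mulrA.
by rewrite mulrA [m%:R * p j]mulrC; apply: ler_wpM2r; [exact: G_ge0 | exact: capacity].
Qed.

Theorem lemma4p6 (R : realFieldType) (M : finType) (n m : nat)
  (p : M -> R) (w : 'I_n -> mset M -> R) (LP : R) (T : 'I_n -> mset M)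
  (g : M -> 'I_n) :
  (forall j, 0 <= p j) -> \sum_(j : M) p j = 1 ->
  (1 <= m)%N ->
  is_LP m p w LP ->
  (forall i, monotone_val (w i)) ->
  (forall i, dim_returns (w i)) ->
  (* g is a greedy allocation rule: item j goes to an agent maximizing the marginal gain *)
  (forall j i, gain w T i j <= gain w T (g j) j) ->
  \sum_(j : M) p j * gain w T (g j) j >= (m%:R)^-1 * (LP - \sum_(i < n) w i (T i)).
Proof.
move=> _ _ m_ge1 [[x x_feasible <-] _] mono dr greedy.
pose G j := gain w T (g j) j.
have G_ge0 j : 0 <= G j by exact: marginal_ge0.
have surplus : lp_value w x - \sum_(i < n) w i (T i) <= m%:R * \sum_j p j * G j.
  apply: lp_surplus_bound x_feasible G_ge0 _ => i S _.
  exact: bundle_surplus_bound (mono i) (dr i) (fun j => greedy j i).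
have m_gt0 : 0 < (m%:R : R) by rewrite ltr0n.
by rewrite ler_pdivrMl.
Qed.
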